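(* Let $t \in \mathbb{N}$. For a PLD realization $L$, define the random variables \[ \psi^{\mathrm{rem}}_{t}(L) \coloneqq \ln\!\left(\frac{1}{t}\Big(e^{L} + \sum_{i \in [t-1]} e^{-\widetilde{L}_{i}}\Big)\right), \qquad \psi^{\mathrm{add}}_{t}(L) \coloneqq -\ln\!\left(\frac{1}{t} \sum_{i \in [t]} e^{-L_{i}}\right), \] where $L, L_1, \ldots, L_t$ are independent copies of $L$, and $\widetilde{L}_1, \ldots, \widetilde{L}_{t-1}$ are independent copies of the PLD dual $\widetilde{L}$ of $L$ (independent of $L$). Then for any two distributions $P, Q$ on a common domain $\Omega$, $\mathcal{L}_{\bar{P}_{t}/Q^{t}}$ is distributed as $\psi^{\mathrm{rem}}_{t}(\mathcal{L}_{P/Q})$ and $\mathcal{L}_{Q^{t}/\bar{P}_{t}}$ is distributed as $\psi^{\mathrm{add}}_{t}(\mathcal{L}_{Q/P})$.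
   Context: Privacy loss random variable: for distributions $P,Q$ on $\Omega$, $\mathcal{L}_{P/Q}$ is the random variable $\ln\big(P(\omega)/Q(\omega)\big)$ with $\omega \sim P$ (values in $[-\infty,\infty]$). A discrete random variable $L$ on $[-\infty,\infty]$ with PMF $f_L$ is a PLD realization if $\mathbb{E}[e^{-L}] \le 1$ and $f_L(-\infty)=0$; its PLD dual $\widetilde{L}$ has PMF $f_{\widetilde{L}}(l) = f_L(-l) e^{l}$ for finite $l$ and an atom at $+\infty$ of mass $1 - \mathbb{E}[e^{-L}]$. $Q^{t}$ denotes the product distribution of $t$ independent draws from $Q$ on $\Omega^t$, and $\bar{P}_{t} \coloneqq \frac{1}{t}\sum_{i \in [t]} Q^{i-1} \times P \times Q^{t-i}$ (the output distribution of random allocation of one element to one of $t$ steps). *)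

From HB Require Import structures.
From mathcomp Require Import all_boot all_order all_algebra.
From mathcomp Require Import all_classical all_reals all_analysis.

Set Implicit Arguments.
Unset Strict Implicit.
Unset Printing Implicit Defensive.
Import Order.TTheory GRing.Theory Num.Theory.

Local Open Scope classical_set_scope.
Local Open Scope ring_scope.

Definition is_pmf (R : realType) (Ω : choiceType) (P : Ω -> R) : Prop :=
  (forall w, 0 <= P w) /\ (\esum_(w in [set: Ω]) (P w)%:E = 1)%E.

Definition ploss (R : realType) (Ω : Type) (P Q : Ω -> R) (w : Ω) : \bar R :=
  if P w == 0 then -oo%E
  else if Q w == 0 then +oo%E
  else (ln (P w / Q w))%:E.

Definition law (R : realType) (Ω : choiceType) (P : Ω -> R) (X : Ω -> \bar R)
  (v : \bar R) : \bar R :=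
  \esum_(w in [set w | X w = v]) (P w)%:E.

(* Product distribution Q^t on Ω^t and the random allocation distribution
   bar P_t = 1/t sum_{i in [t]} Q^{i-1} x P x Q^{t-i}. *)
Definition prodQ (R : realType) (Ω : Type) (t : nat) (Q : Ω -> R)
  (w : {ffun 'I_t -> Ω}) : R :=
  \prod_(j < t) Q (w j).

Arguments prodQ {R Ω} t Q w.

Definition allocP (R : realType) (Ω : Type) (t : nat) (P Q : Ω -> R)
  (w : {ffun 'I_t -> Ω}) : R :=
  t%:R^-1 * \sum_(i < t) (P (w i) * \prod_(j < t | j != i) Q (w j)).

Arguments allocP {R Ω} t P Q w.

(* PLD realizations, represented by their pmf f : \bar R -> \bar R. *)
Definition exp_negL (R : realType) (f : \bar R -> \bar R) : \bar R :=
  \esum_(l in [set: \bar R]) (f l * expeR (- l))%E.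

Definition is_pmfE (R : realType) (f : \bar R -> \bar R) : Prop :=
  (forall l, 0 <= f l)%E /\ (\esum_(l in [set: \bar R]) f l = 1)%E.

Definition PLD_realization (R : realType) (f : \bar R -> \bar R) : Prop :=
  is_pmfE f /\ (exp_negL f <= 1)%E /\ f -oo%E = 0%E.

Definition PLD_dual (R : realType) (f : \bar R -> \bar R) (l : \bar R) : \bar R :=
  match l with
  | r%:E => (f (- r)%:E * (expR r)%:E)%E
  | +oo%E => (1 - exp_negL f)%E
  | -oo%E => 0%E
  end.

(* Law of g(X_1..X_n1, Y_1..Y_n2) where X_i ~ f1, Y_j ~ f2 are all mutually
   independent (pushforward of the product pmf). *)
Definition indep_law (R : realType) (f1 : \bar R -> \bar R) (n1 : nat)
  (f2 : \bar R -> \bar R) (n2 : nat)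
  (g : {ffun 'I_n1 -> \bar R} -> {ffun 'I_n2 -> \bar R} -> \bar R)
  (v : \bar R) : \bar R :=
  \esum_(xy in [set xy : {ffun 'I_n1 -> \bar R} * {ffun 'I_n2 -> \bar R} |
                 g xy.1 xy.2 = v])
     ((\prod_(i < n1) f1 (xy.1 i)) * (\prod_(j < n2) f2 (xy.2 j)))%E.

Arguments indep_law {R} f1 n1 f2 n2 g v.

Definition psi_rem_fun (R : realType) (t : nat)
  (x : {ffun 'I_1 -> \bar R}) (y : {ffun 'I_t.-1 -> \bar R}) : \bar R :=
  lne ((t%:R^-1)%:E * (expeR (x ord0) + \sum_(i < t.-1) expeR (- y i)))%E.

Definition psi_add_fun (R : realType) (t : nat)
  (x : {ffun 'I_t -> \bar R}) (_ : {ffun 'I_0 -> \bar R}) : \bar R :=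
  (- lne ((t%:R^-1)%:E * \sum_(i < t) expeR (- x i)))%E.

Definition psi_rem_law (R : realType) (t : nat) (f : \bar R -> \bar R) :
  \bar R -> \bar R :=
  indep_law f 1 (PLD_dual f) t.-1 (@psi_rem_fun R t).

Definition psi_add_law (R : realType) (t : nat) (f : \bar R -> \bar R) :
  \bar R -> \bar R :=
  indep_law f t (fun _ => 0%E) 0 (@psi_add_fun R t).

(* Both laws are pushforwards of product measures, so the theorem reduces to
   pointwise identities inside sums of nonnegative extended reals over fibres.
   Wherever Q^t(w) > 0, put s(w) = sum_i P(w_i)/Q(w_i) = sum_i e^{-L_{Q/P}(w_i)};
   then  bar P_t(w) / Q^t(w) = s(w) / t,  which is psi^add_t pointwise.
   For psi^rem_t, the fibres of L_{bar P_t/Q^t} are invariant under permuting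
   the coordinates, so bar P_t may be replaced by its first component
   P x Q^{t-1}; then s(w) = e^{L_{P/Q}(w_1)} + sum_{j>1} e^{-L_{Q/P}(w_j)},
   and the law of L_{Q/P} under Q is exactly the PLD dual of the law of
   L_{P/Q} under P. *)

From HB Require Import structures.
From mathcomp Require Import all_boot all_order all_algebra all_fingroup.
From mathcomp Require Import all_classical all_reals all_analysis.

Set Implicit Arguments.
Unset Strict Implicit.
Unset Printing Implicit Defensive.
Import Order.TTheory GRing.Theory Num.Theory.

Local Open Scope classical_set_scope.
Local Open Scope ring_scope.

Section esum_algebra.
Context {R : realType}.
Local Open Scope ereal_scope.

Lemma esumZl (T : choiceType) (A : set T) (c : \bar R) (a : T -> \bar R) :
  0 <= c -> (forall i, A i -> 0 <= a i) ->
  \esum_(i in A) (c * a i) = c * \esum_(i in A) a i.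
Proof.
case: c => [r| |] // c_ge0 a_ge0.
  have sumZ F : fsets A F -> \sum_(i \in F) (r%:E * a i) = r%:E * \sum_(i \in F) a i.
    move=> [finF FA]; rewrite !fsbig_finite// big_seq [X in _ * X]big_seq.
    rewrite ge0_sume_distrr// => i.
    by rewrite in_fset_set// inE => /FA /a_ge0.
  have sums_neq0 : [set \sum_(i \in F) a i | F in fsets A] != set0.
    by apply/set0P; exists 0, set0; [exact: fsets_set0 | rewrite fsbig_set0].
  rewrite /esum -(ereal_supZl sums_neq0 c_ge0); congr ereal_sup.
  apply/seteqP; split => y /=.
    by move=> [F AF <-]; exists (\sum_(i \in F) a i); [exists F | rewrite sumZ].
  by move=> [_ [F AF <-] <-]; exists F; rewrite ?sumZ.
have [[k Ak ak_neq0]|a_eq0] := pselect (exists2 k, A k & a k != 0).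
  have ak_gt0 : 0 < a k by rewrite lt0e ak_neq0 a_ge0.
  have ak_le_sum (b : T -> \bar R) : b k <= \esum_(i in A) b i.
    apply: esum_ge; exists [set k]; last by rewrite fsbig_set1.
    by split; [exact: finite_set1 | move=> _ ->].
  have sum_gt0 : 0 < \esum_(i in A) a i := lt_le_trans ak_gt0 (ak_le_sum a).
  rewrite (gt0_mulye sum_gt0); apply/eqP; rewrite eq_le leey /=.
  by apply: le_trans (ak_le_sum (fun i => +oo * a i)); rewrite gt0_mulye.
have {}a_eq0 i : A i -> a i = 0.
  by move=> Ai; apply/eqP; apply: contra_notT a_eq0 => ?; exists i.
by rewrite !esum1 ?mule0// => i /a_eq0 ->; rewrite ?mule0.
Qed.

Lemma esumZr (T : choiceType) (A : set T) (c : \bar R) (a : T -> \bar R) :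
  0 <= c -> (forall i, A i -> 0 <= a i) ->
  \esum_(i in A) (a i * c) = (\esum_(i in A) a i) * c.
Proof.
by move=> c_ge0 a_ge0; rewrite muleC -esumZl//; apply: eq_esum => i _; rewrite muleC.
Qed.

Lemma esum_distrlr (T1 T2 : choiceType) (A : set T1) (B : set T2)
    (a : T1 -> \bar R) (b : T2 -> \bar R) :
  (forall i, A i -> 0 <= a i) -> (forall j, B j -> 0 <= b j) ->
  (\esum_(i in A) a i) * (\esum_(j in B) b j) = \esum_(k in A `*` B) (a k.1 * b k.2).
Proof.
move=> a_ge0 b_ge0.
rewrite -(esum_esum (J := fun=> B) (a := fun i j => a i * b j)); last first.
  by move=> i j Ai Bj; rewrite mule_ge0 ?a_ge0 ?b_ge0.
rewrite -esumZr//; last exact: esum_ge0.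
by apply: eq_esum => i Ai; rewrite esumZl ?a_ge0.
Qed.

Lemma esum_fibers (T U : choiceType) (X : T -> U) (B : set U) (a : T -> \bar R) :
  (forall w, B (X w) -> 0 <= a w) ->
  \esum_(u in B) \esum_(w in [set w | X w = u]) a w = \esum_(w in X @^-1` B) a w.
Proof.
move=> a_ge0; rewrite esum_esum; last by move=> u w Bu /= Xw; rewrite a_ge0// Xw.
rewrite (reindex_esum (X @^-1` B) _ (fun w => (X w, w)))//; split.
- by move=> w /= Bw.
- by move=> w w' _ _ [].
- by move=> [u w] /= [Bu Xw]; exists w; rewrite ?Xw.
Qed.

Lemma eq_esum_support (T : choiceType) (A B : set T) (a : T -> \bar R) :
  (forall i, a i != 0 -> A i <-> B i) -> \esum_(i in A) a i = \esum_(i in B) a i.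
Proof.
move=> AB; rewrite esum_mkcond [RHS]esum_mkcond; apply: eq_esum => i _.
have [->|/AB ABi] := eqVneq (a i) 0; first by rewrite !if_same.
by rewrite (_ : (i \in A) = (i \in B))//; apply/idP/idP => /set_mem/ABi/mem_set.
Qed.

End esum_algebra.

Section fcons.
Variable T : Type.

Definition fcons n (x : T) (w : {ffun 'I_n -> T}) : {ffun 'I_n.+1 -> T} :=
  [ffun i => if unlift ord0 i is Some j then w j else x].

Definition ftail n (w : {ffun 'I_n.+1 -> T}) : {ffun 'I_n -> T} :=
  [ffun j => w (lift ord0 j)].

Lemma fcons0 n (x : T) (w : {ffun 'I_n -> T}) : fcons x w ord0 = x.
Proof. by rewrite ffunE unlift_none. Qed.

Lemma fconsS n (x : T) (w : {ffun 'I_n -> T}) j : fcons x w (lift ord0 j) = w j.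
Proof. by rewrite ffunE liftK. Qed.

Lemma fcons_ftail n (w : {ffun 'I_n.+1 -> T}) : fcons (w ord0) (ftail w) = w.
Proof. by apply/ffunP => i; rewrite ffunE; case: unliftP => [j ->|->]; rewrite ?ffunE. Qed.

Lemma fcons_inj n (x x' : T) (w w' : {ffun 'I_n -> T}) :
  fcons x w = fcons x' w' -> x = x' /\ w = w'.
Proof.
move=> eq_xw; split; first by rewrite -(fcons0 x w) eq_xw fcons0.
by apply/ffunP => j; rewrite -(fconsS x w) eq_xw fconsS.
Qed.

Lemma big_fcons (S : Type) (idx : S) (op : S -> S -> S) n (x : T)
    (w : {ffun 'I_n -> T}) (F : T -> S) :
  \big[op/idx]_(i < n.+1) F (fcons x w i) = op (F x) (\big[op/idx]_(j < n) F (w j)).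
Proof. by rewrite big_ord_recl fcons0; congr (op _ _); apply: eq_bigr => j _; rewrite fconsS. Qed.

End fcons.

Section law_product.
Context {R : realType}.
Local Open Scope ereal_scope.

Lemma prod_esum (T : choiceType) n (A : 'I_n -> set T) (a : 'I_n -> T -> \bar R) :
  (forall i w, A i w -> 0 <= a i w) ->
  \prod_(i < n) (\esum_(w in A i) a i w) =
  \esum_(w in [set w : {ffun 'I_n -> T} | forall i, A i (w i)]) \prod_(i < n) a i (w i).
Proof.
elim: n A a => [|n IHn] A a a_ge0.
  rewrite big_ord0 (_ : [set w | _] = [set ffun0 (card_ord 0)]) ?esum_set1 ?big_ord0//.
  by apply/seteqP; split => w _ /=; [apply/ffunP => -[] | case].
rewrite big_ord_recl IHn => [|i w]; last exact: a_ge0.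
rewrite esum_distrlr => [|w|w Aw]; [|exact: a_ge0|by apply: prode_ge0 => i _; apply: a_ge0].
rewrite (reindex_esum (A ord0 `*` [set w : {ffun 'I_n -> T} | forall i, A (lift ord0 i) (w i)])
   _ (fun xw => fcons xw.1 xw.2)).
  apply: eq_esum => -[x w] _ /=; rewrite big_ord_recl fcons0.
  by congr (_ * _); apply: eq_bigr => i _; rewrite fconsS.
split.
- move=> [x w] /= [Ax Aw] i.
  by case: (unliftP ord0 i) => [j ->|->]; rewrite ?fconsS ?fcons0.
- by move=> [x w] [x' w'] _ _ /= /(@fcons_inj T)[-> ->].
- move=> w /= Aw; exists (w ord0, ftail w); last exact: fcons_ftail.
  by split => //= j; rewrite ffunE.
Qed.

Lemma prod_law (Ω : choiceType) (P : Ω -> R) (X : Ω -> \bar R) n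
    (x : {ffun 'I_n -> \bar R}) : (forall w, 0 <= P w)%R ->
  \prod_(i < n) law P X (x i) =
  \esum_(w in [set w : {ffun 'I_n -> Ω} | [ffun i => X (w i)] = x]) (prodQ n P w)%:E.
Proof.
move=> P_ge0; rewrite /law prod_esum => [|i w _]; last by rewrite lee_fin.
rewrite (_ : [set w | _] = [set w : {ffun 'I_n -> Ω} | [ffun i => X (w i)] = x]).
  by apply: eq_esum => w _; rewrite prodEFin.
apply/seteqP; split => w /=; first by move=> Xw; apply/ffunP => i; rewrite ffunE Xw.
by move=> <- i; rewrite ffunE.
Qed.

Lemma indep_law_law (Ω1 Ω2 : choiceType) (P1 : Ω1 -> R) (P2 : Ω2 -> R)
    (X1 : Ω1 -> \bar R) (X2 : Ω2 -> \bar R) n1 n2 g v :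
  (forall w, 0 <= P1 w)%R -> (forall w, 0 <= P2 w)%R ->
  indep_law (law P1 X1) n1 (law P2 X2) n2 g v =
  \esum_(ab in [set ab : {ffun 'I_n1 -> Ω1} * {ffun 'I_n2 -> Ω2} |
                g [ffun i => X1 (ab.1 i)] [ffun j => X2 (ab.2 j)] = v])
     (prodQ n1 P1 ab.1 * prodQ n2 P2 ab.2)%:E.
Proof.
move=> P1_ge0 P2_ge0.
pose X (ab : {ffun 'I_n1 -> Ω1} * {ffun 'I_n2 -> Ω2}) :=
  ([ffun i => X1 (ab.1 i)], [ffun j => X2 (ab.2 j)]).
have prodQ_ge0 n (P : _ -> R) w : (forall w, 0 <= P w)%R -> 0 <= (prodQ n P w)%:E.
  by move=> P_ge0; rewrite lee_fin; apply: prodr_ge0.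
rewrite /indep_law -(esum_fibers (X := X) (B := [set xy | g xy.1 xy.2 = v])); last first.
  by move=> ab _; rewrite EFinM mule_ge0 ?prodQ_ge0.
apply: eq_esum => -[x y] _ /=.
rewrite !prod_law// esum_distrlr => [|a _|b _]; [|exact: prodQ_ge0..].
rewrite (_ : _ `*` _ = [set ab | X ab = (x, y)]).
  by apply: eq_esum => ab _; rewrite EFinM.
by apply/seteqP; split => -[a b] /=; [case=> <- <- | case=> <- <-].
Qed.

Lemma indep_law_nil (f1 f2 f2' : \bar R -> \bar R) n1 g :
  indep_law f1 n1 f2 0 g = indep_law f1 n1 f2' 0 g.
Proof. by apply/funext => v; apply: eq_esum => xy _; rewrite !big_ord0. Qed.

End law_product.

Section privacy_loss.
Context {R : realType} {Ω : choiceType} (P Q : Ω -> R).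
Hypotheses (P_ge0 : forall w, 0 <= P w) (Q_ge0 : forall w, 0 <= Q w).

Lemma expeR_ploss w : P w != 0 -> Q w != 0 -> expeR (ploss P Q w) = (P w / Q w)%:E.
Proof.
move=> Pw_neq0 Qw_neq0; rewrite /ploss (negbTE Pw_neq0) (negbTE Qw_neq0) /=.
by rewrite lnK// posrE divr_gt0// lt0r ?Pw_neq0 ?Qw_neq0 ?P_ge0 ?Q_ge0.
Qed.

Lemma expeR_Nploss w : P w != 0 -> expeR (- ploss P Q w) = (Q w / P w)%:E.
Proof.
move=> Pw_neq0; have [Qw0|Qw_neq0] := eqVneq (Q w) 0.
  by rewrite /ploss (negbTE Pw_neq0) Qw0 eqxx mul0r.
rewrite /ploss (negbTE Pw_neq0) (negbTE Qw_neq0) /= expRN lnK ?invf_div//.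
by rewrite posrE divr_gt0// lt0r ?Pw_neq0 ?Qw_neq0 ?P_ge0 ?Q_ge0.
Qed.

Lemma ploss_swap w : P w != 0 -> ploss Q P w = (- ploss P Q w)%E.
Proof.
move=> Pw_neq0; rewrite /ploss (negbTE Pw_neq0).
have [//|Qw_neq0] := eqVneq (Q w) 0%R; rewrite /= -lnV ?invf_div//.
by rewrite posrE divr_gt0// lt0r ?Pw_neq0 ?Qw_neq0 ?P_ge0 ?Q_ge0.
Qed.

Lemma mul_expeR_Nploss w :
  ((P w)%:E * expeR (- ploss P Q w) = (if P w == 0 then 0 else Q w)%:E)%E.
Proof.
have [->|Pw_neq0] := eqVneq (P w) 0%R; first by rewrite mul0e.
by rewrite expeR_Nploss// -EFinM mulrC divfK.
Qed.

End privacy_loss.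

Section PLD_dual_law.
Context {R : realType} {Ω : choiceType} (P Q : Ω -> R).
Hypotheses (P_ge0 : forall w, 0 <= P w) (Q_pmf : is_pmf Q).
Local Open Scope ereal_scope.

Lemma exp_negL_law :
  exp_negL (law P (ploss P Q)) = \esum_(w in [set w | P w != 0%R]) (Q w)%:E.
Proof.
have [Q_ge0 _] := Q_pmf.
transitivity (\esum_(l in [set: \bar R]) \esum_(w in [set w | ploss P Q w = l])
    ((P w)%:E * expeR (- ploss P Q w))).
  apply: eq_esum => l _; rewrite -esumZr ?expeR_ge0// => [|w _]; last by rewrite lee_fin.
  by apply: eq_esum => w /= ->.
rewrite esum_fibers => [|w _]; last by rewrite mule_ge0 ?lee_fin ?expeR_ge0.
rewrite preimage_setT [RHS]esum_mkcond; apply: eq_esum => w _.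
rewrite mul_expeR_Nploss// (_ : (w \in _) = (P w != 0%R)); last first.
  by apply/idP/idP => [/set_mem|/mem_set].
by case: eqP.
Qed.

Lemma PLD_dual_law : PLD_dual (law P (ploss P Q)) = law Q (ploss Q P).
Proof.
have [Q_ge0 Q_sum1] := Q_pmf.
apply/funext => -[r| |] /=.
- rewrite /law -esumZr ?lee_fin ?expR_ge0// => [|w _]; last by rewrite lee_fin.
  rewrite (_ : [set w | _] = [set w | ploss Q P w = r%:E]); last first.
    apply/seteqP; split => w /=.
      have [Pw0|Pw_neq0] := eqVneq (P w) 0%R; first by rewrite /ploss Pw0 eqxx.
      by rewrite (ploss_swap P_ge0 Q_ge0)// => ->; rewrite /= opprK.
    have [Qw0|Qw_neq0] := eqVneq (Q w) 0%R; first by rewrite /ploss Qw0 eqxx.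
    by rewrite (ploss_swap Q_ge0 P_ge0)// => ->.
  apply: eq_esum => w /= Lw.
  have [Qw0|Qw_neq0] := eqVneq (Q w) 0%R; first by move: Lw; rewrite /ploss Qw0 eqxx.
  have [Pw0|Pw_neq0] := eqVneq (P w) 0%R.
    by move: Lw; rewrite /ploss Pw0 eqxx (negbTE Qw_neq0).
  by rewrite -[(expR r)%:E]/(expeR r%:E) -Lw expeR_ploss// -EFinM mulrC divfK.
- have QP_sum1 : \esum_(w in [set w | P w != 0%R]) (Q w)%:E +
      \esum_(w in ~` [set w | P w != 0%R]) (Q w)%:E = 1.
    by rewrite -Q_sum1 [RHS](esumID [set w | P w != 0%R]) ?setTI// => w _; rewrite lee_fin.
  have fin_QP : \esum_(w in [set w | P w != 0%R]) (Q w)%:E \is a fin_num.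
    have sum_ge0 (A : set Ω) : 0 <= \esum_(w in A) (Q w)%:E.
      by apply: esum_ge0 => w _; rewrite lee_fin.
    by rewrite ge0_fin_numE// (@le_lt_trans _ _ 1) ?ltry// -[leRHS]QP_sum1 leeDl.
  rewrite exp_negL_law -QP_sum1 addeC addeK//; apply: eq_esum_support => w.
  rewrite eqe /ploss /= => /negbTE ->.
  by case: eqP; split => // /negP.
- rewrite /law esum1// => w /=; rewrite /ploss.
  by have [->//|_] := eqVneq (Q w) 0%R; case: ifP.
Qed.

End PLD_dual_law.

Definition allocP_at (R : realType) (Ω : Type) (t : nat) (P Q : Ω -> R) (i : 'I_t)
    (w : {ffun 'I_t -> Ω}) : R :=
  P (w i) * \prod_(j < t | j != i) Q (w j).

Section allocation_symmetry.
Context {R : realType} {Ω : choiceType} (t : nat) (P Q : Ω -> R).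
Implicit Types (w : {ffun 'I_t -> Ω}) (s : {perm 'I_t}).

Lemma prodQ_perm s w : prodQ t Q [ffun j => w (s j)] = prodQ t Q w.
Proof.
by rewrite /prodQ [RHS](reindex_inj (@perm_inj _ s)); apply: eq_bigr => j _; rewrite ffunE.
Qed.

Lemma allocP_at_perm s i w :
  allocP_at P Q i [ffun j => w (s j)] = allocP_at P Q (s i) w.
Proof.
rewrite /allocP_at ffunE [in RHS](reindex_inj (@perm_inj _ s)) /=; congr (_ * _).
by apply: eq_big => [j|j _]; rewrite ?(inj_eq perm_inj) ?ffunE.
Qed.

Lemma allocP_perm s w : allocP t P Q [ffun j => w (s j)] = allocP t P Q w.
Proof.
rewrite /allocP [in RHS](reindex_inj (@perm_inj _ s)); congr (_ * _).
by apply: eq_bigr => i _; exact: allocP_at_perm.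
Qed.

Hypotheses (P_ge0 : forall x, 0 <= P x) (Q_ge0 : forall x, 0 <= Q x).

Lemma allocP_at_ge0 i w : 0 <= allocP_at P Q i w.
Proof. by rewrite mulr_ge0// prodr_ge0. Qed.

Lemma esum_allocP (S : set {ffun 'I_t -> Ω}) (i0 : 'I_t) :
  (forall s w, S w -> S [ffun j => w (s j)]) ->
  (\esum_(w in S) (allocP t P Q w)%:E = \esum_(w in S) (allocP_at P Q i0 w)%:E)%E.
Proof.
move=> S_perm; have t_gt0 : (0 < t)%N by apply: leq_ltn_trans (ltn_ord i0).
have esum_at i : (\esum_(w in S) (allocP_at P Q i w)%:E =
                  \esum_(w in S) (allocP_at P Q i0 w)%:E)%E.
  rewrite (reindex_esum S S (fun w => [ffun j => w (tperm i0 i j)])).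
    by apply: eq_esum => w _; rewrite allocP_at_perm tpermR.
  have permK : involutive (fun w : {ffun 'I_t -> Ω} => [ffun j => w (tperm i0 i j)]).
    by move=> w; apply/ffunP => j; rewrite !ffunE tpermK.
  split; [by move=> w /S_perm | exact: in2W (can_inj permK) |].
  by move=> w Sw; exists [ffun j => w (tperm i0 i j)]; [exact: S_perm | exact: permK].
transitivity (\sum_(i < t) \esum_(w in S) (t%:R^-1 * allocP_at P Q i w)%:E)%E.
  rewrite -esum_sum => [|w i _ _]; last by rewrite lee_fin mulr_ge0 ?allocP_at_ge0.
  by apply: eq_esum => w _; rewrite sumEFin -mulr_sumr.
transitivity (\sum_(i < t) (t%:R^-1)%:E * \esum_(w in S) (allocP_at P Q i0 w)%:E)%E.
  apply: eq_bigr => i _; rewrite -(esum_at i) -esumZl ?lee_fin ?invr_ge0//.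
  by move=> w _; rewrite lee_fin allocP_at_ge0.
rewrite -ge0_sume_distrl => [|i _]; last by rewrite lee_fin invr_ge0.
by rewrite sumEFin sumr_const card_ord -[_ *+ t]mulr_natr mulVf ?pnatr_eq0 -?lt0n// mul1e.
Qed.

End allocation_symmetry.

Section allocation_loss.
Context {R : realType} {Ω : choiceType} (P Q : Ω -> R).
Hypotheses (P_ge0 : forall x, 0 <= P x) (Q_ge0 : forall x, 0 <= Q x).

Lemma allocP_prodQ t (w : {ffun 'I_t -> Ω}) : (forall i, Q (w i) != 0) ->
  allocP t P Q w = t%:R^-1 * (\sum_(i < t) P (w i) / Q (w i)) * prodQ t Q w.
Proof.
move=> Qw_neq0; rewrite /allocP /prodQ -mulrA big_distrl /=; congr (_ * _).
by apply: eq_bigr => i _; rewrite [in RHS](bigD1 i)//= mulrA divfK.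
Qed.

Lemma sum_expeR_Nploss t (w : {ffun 'I_t -> Ω}) : (forall i, Q (w i) != 0) ->
  (\sum_(i < t) expeR (- ploss Q P (w i)) = (\sum_(i < t) P (w i) / Q (w i))%:E)%E.
Proof. by move=> Qw_neq0; rewrite -sumEFin; apply: eq_bigr => i _; rewrite expeR_Nploss. Qed.

Lemma ploss_prodQ_allocP t (w : {ffun 'I_t -> Ω}) y : (0 < t)%N -> prodQ t Q w != 0 ->
  ploss (prodQ t Q) (allocP t P Q) w = @psi_add_fun R t [ffun i => ploss Q P (w i)] y.
Proof.
move=> t_gt0 prodQ_neq0; have Qw_neq0 i : Q (w i) != 0 by move/prodf_neq0: prodQ_neq0; apply.
rewrite [LHS]/ploss (negbTE prodQ_neq0) allocP_prodQ// /psi_add_fun.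
rewrite (eq_bigr (fun i => expeR (- ploss Q P (w i)))) => [|i _]; last by rewrite ffunE.
rewrite sum_expeR_Nploss// -EFinM; set s := \sum_(i < t) _.
have [->|s_neq0] := eqVneq s 0; first by rewrite mulr0 mul0r eqxx /= lexx.
have ts_gt0 : 0 < t%:R^-1 * s.
  by rewrite mulr_gt0 ?invr_gt0 ?ltr0n// lt0r s_neq0 sumr_ge0// => i _; rewrite divr_ge0.
rewrite mulf_eq0 (negbTE prodQ_neq0) orbF (gt_eqF ts_gt0) lne_EFin// /=.
by rewrite invfM mulrCA mulfV// mulr1 lnV// posrE.
Qed.

Lemma allocP_at0_fcons t x (b : {ffun 'I_t -> Ω}) :
  allocP_at P Q ord0 (fcons x b) = P x * prodQ t Q b.
Proof.
rewrite /allocP_at fcons0 big_mkcond big_ord_recl eqxx /= mul1r /prodQ; congr (_ * _).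
by apply: eq_bigr => j _; rewrite fconsS.
Qed.

Lemma ploss_allocP_prodQ t (a : {ffun 'I_1 -> Ω}) (b : {ffun 'I_t -> Ω}) :
  P (a ord0) != 0 -> (forall j, Q (b j) != 0) ->
  ploss (allocP t.+1 P Q) (prodQ t.+1 Q) (fcons (a ord0) b) =
  @psi_rem_fun R t.+1 [ffun i => ploss P Q (a i)] [ffun j => ploss Q P (b j)].
Proof.
move=> Px_neq0 Qb_neq0; set x := a ord0; set w := fcons x b.
have allocP_gt0 : 0 < allocP t.+1 P Q w.
  rewrite /allocP mulr_gt0 ?invr_gt0 ?ltr0n// big_ord_recl ltr_pwDl//.
    have prodQb_gt0 : 0 < prodQ t Q b.
      by rewrite /prodQ prodr_gt0// => j _; rewrite lt0r Qb_neq0 Q_ge0.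
    by change (0 < allocP_at P Q ord0 w); rewrite allocP_at0_fcons mulr_gt0// lt0r Px_neq0 P_ge0.
  by rewrite sumr_ge0// => i _; exact: allocP_at_ge0.
rewrite [LHS]/ploss (gt_eqF allocP_gt0) /psi_rem_fun ffunE -/x.
rewrite (eq_bigr (fun j => expeR (- ploss Q P (b j)))) => [|j _]; last by rewrite ffunE.
have [Qx0|Qx_neq0] := eqVneq (Q x) 0.
  have sum_neqNy : (\sum_(j < t) expeR (- ploss Q P (b j)) != -oo)%E.
    by rewrite -ltNye (lt_le_trans ltNy0)// sume_ge0// => j _; exact: expeR_ge0.
  rewrite /prodQ /w big_fcons Qx0 mul0r eqxx [ploss P Q x]/ploss (negbTE Px_neq0) Qx0 eqxx.
  by rewrite /= addye// gt0_muley// lte_fin invr_gt0 ltr0n.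
have Qw_neq0 i : Q (w i) != 0.
  by rewrite /w; case: (unliftP ord0 i) => [j ->|->]; rewrite ?fconsS ?fcons0.
have prodQ_neq0 : prodQ t.+1 Q w != 0 by apply/prodf_neq0 => i _.
rewrite (negbTE prodQ_neq0) allocP_prodQ// mulfK// expeR_ploss// sum_expeR_Nploss//.
rewrite /w (big_fcons 0 +%R x b (fun y => P y / Q y)) -EFinD -EFinM lne_EFin//.
rewrite mulr_gt0 ?invr_gt0 ?ltr0n// ltr_pwDl//.
  by rewrite divr_gt0// lt0r ?Px_neq0 ?Qx_neq0 ?P_ge0 ?Q_ge0.
by rewrite sumr_ge0// => j _; rewrite divr_ge0.
Qed.

End allocation_loss.

Section allocation_laws.
Context {R : realType} {Ω : choiceType} (P Q : Ω -> R).
Hypotheses (P_ge0 : forall x, 0 <= P x) (Q_ge0 : forall x, 0 <= Q x).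
Local Open Scope ereal_scope.

Lemma law_allocP_ploss t v :
  law (allocP t.+1 P Q) (ploss (allocP t.+1 P Q) (prodQ t.+1 Q)) v =
  \esum_(ab in [set ab : {ffun 'I_1 -> Ω} * {ffun 'I_t -> Ω} |
      @psi_rem_fun R t.+1 [ffun i => ploss P Q (ab.1 i)] [ffun j => ploss Q P (ab.2 j)] = v])
    (prodQ 1 P ab.1 * prodQ t Q ab.2)%:E.
Proof.
set L := ploss (allocP t.+1 P Q) (prodQ t.+1 Q).
pose e (ab : {ffun 'I_1 -> Ω} * {ffun 'I_t -> Ω}) := fcons (ab.1 ord0) ab.2.
have e_bij : set_bij [set ab | L (e ab) = v] [set w | L w = v] e.
  split=> [ab //|[a b] [a' b'] _ _ /(@fcons_inj Ω) /= [a0 ->]|w Lw].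
    by congr pair; apply/ffunP => i; rewrite (ord1 i).
  by exists ([ffun => w ord0], ftail w); rewrite /e /= ffunE fcons_ftail.
rewrite /law (esum_allocP P_ge0 Q_ge0 ord0) => [|s w /=]; last first.
  by rewrite /L /ploss allocP_perm prodQ_perm.
rewrite (reindex_esum _ _ _ _ e_bij).
under eq_esum do rewrite allocP_at0_fcons.
under [RHS]eq_esum do rewrite [prodQ 1 P _]big_ord1.
apply: eq_esum_support => -[a b] /=; rewrite eqe mulf_eq0 negb_or.
move=> /andP[Pa_neq0 /prodf_neq0 Qb_neq0].
by rewrite /L /e ploss_allocP_prodQ// => j; exact: Qb_neq0.
Qed.

Lemma law_prodQ_ploss t v : (0 < t)%N ->
  law (prodQ t Q) (ploss (prodQ t Q) (allocP t P Q)) v =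
  \esum_(ab in [set ab : {ffun 'I_t -> Ω} * {ffun 'I_0 -> Ω} |
      @psi_add_fun R t [ffun i => ploss Q P (ab.1 i)] [ffun j => ploss Q P (ab.2 j)] = v])
    (prodQ t Q ab.1 * prodQ 0 Q ab.2)%:E.
Proof.
move=> t_gt0; set L := ploss (prodQ t Q) (allocP t P Q).
have fst_bij : set_bij [set ab : {ffun 'I_t -> Ω} * {ffun 'I_0 -> Ω} | L ab.1 = v]
    [set w | L w = v] fst.
  split=> [ab //|[a b] [a' b'] _ _ /= ->|w Lw]; last by exists (w, ffun0 (card_ord 0)).
  by congr pair; apply/ffunP => -[].
rewrite /law (reindex_esum _ _ _ _ fst_bij).
under [RHS]eq_esum do rewrite [prodQ 0 Q _]big_ord0 mulr1.
apply: eq_esum_support => -[a b] /=; rewrite eqe => prodQa_neq0.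
by rewrite /L (ploss_prodQ_allocP P_ge0 Q_ge0 [ffun j => ploss Q P (b j)]).
Qed.

End allocation_laws.

Theorem mainTheorem2 (R : realType) (Ω : choiceType) (t : nat) (P Q : Ω -> R) :
  (0 < t)%N -> is_pmf P -> is_pmf Q ->
  law (allocP t P Q) (ploss (allocP t P Q) (prodQ t Q))
    = psi_rem_law t (law P (ploss P Q)) /\
  law (prodQ t Q) (ploss (prodQ t Q) (allocP t P Q))
    = psi_add_law t (law Q (ploss Q P)).
Proof.
move=> t_gt0 [P_ge0 _] Q_pmf; have [Q_ge0 _] := Q_pmf.
split; apply/funext => v.
- case: t t_gt0 => // t _.
  by rewrite /psi_rem_law PLD_dual_law// indep_law_law// law_allocP_ploss.
- rewrite /psi_add_law (indep_law_nil _ _ (law Q (ploss Q P))) indep_law_law//.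
  by rewrite law_prodQ_ploss.
Qed.
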